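(* Let $\mathcal{H}$ be a complex Hilbert space, $A\in\mathcal{B}(\mathcal{H})$ positive and $S\in\mathcal{B}_A(\mathcal{H})$. Then $$d\omega_A^2(S)+2\|S\|_A^2\|\Re_A(S)\|_A\ge\max\left\{\omega_A^2\left(S+S^{\sharp_A}S\right),\ \omega_A^2\left(S-S^{\sharp_A}S\right)\right\}.$$
   Context: $\mathcal{B}(\mathcal{H})$ denotes the bounded linear operators on $\mathcal{H}$. For positive $A$, $\langle x,z\rangle_A=\langle Ax,z\rangle$ and $\|z\|_A=\|A^{1/2}z\|$. $\mathcal{B}_A(\mathcal{H})$ is the set of $S\in\mathcal{B}(\mathcal{H})$ for which some $R\in\mathcal{B}(\mathcal{H})$ satisfies $AR=S^*A$; for such $S$, $S^{\sharp_A}=A^{\dagger}S^*A$ with $A^\dagger$ the Moore–Penrose inverse of $A$. $\Re_A(S)=\frac{S+S^{\sharp_A}}{2}$. For operators $T$ bounded with respect to $\|\cdot\|_A$: $\|T\|_A=\sup_{\|z\|_A=1}\|Tz\|_A$, $\omega_A(T)=\sup_{\|z\|_A=1}|\langle Tz,z\rangle_A|$, and $d\omega_A(T)=\sup_{\|z\|_A=1}(|\langle Tz,z\rangle_A|^2+\|Tz\|_A^4)^{1/2}$. *)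

From HB Require Import structures.
From mathcomp Require Import all_boot all_order all_algebra.
From mathcomp Require Import complex.
From mathcomp Require Import boolp classical_sets reals.
From Stdlib Require Import ClassicalEpsilon.

Set Implicit Arguments.
Unset Strict Implicit.
Unset Printing Implicit Defensive.

Import Order.TTheory GRing.Theory Num.Theory.
Local Open Scope ring_scope.
Local Open Scope classical_set_scope.

Definition hnorm_of (R : realType) (V : lmodType R[i]) (ip : V -> V -> R[i])
  (x : V) : R := Num.sqrt (complex.Re (ip x x)).

Record hilbert (R : realType) (V : lmodType R[i]) := Hilbert {
  ip : V -> V -> R[i];
  ip_linl : forall (a : R[i]) (x y z : V), ip (a *: x + y) z = a * ip x z + ip y z;
  ip_conj : forall x y : V, ip y x = conjc (ip x y);
  ip_ge0 : forall x : V, 0 <= ip x x;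
  ip_eq0 : forall x : V, ip x x = 0 -> x = 0;
  ip_complete : forall u : nat -> V,
    (forall e : R, 0 < e -> exists N : nat, forall m n : nat,
        (N <= m)%N -> (N <= n)%N -> hnorm_of ip (u m - u n) < e) ->
    exists l : V, forall e : R, 0 < e -> exists N : nat, forall n : nat,
        (N <= n)%N -> hnorm_of ip (u n - l) < e
}.

Section Operators.
Variables (R : realType) (V : lmodType R[i]) (H : hilbert V).

Definition hnorm (x : V) : R := hnorm_of (ip H) x.

Definition bounded_op (T : V -> V) : Prop :=
  (forall (a : R[i]) (x y : V), T (a *: x + y) = a *: T x + T y) /\
  exists M : R, forall x : V, hnorm (T x) <= M * hnorm x.

(* Hilbert-space adjoint T^* (unique for bounded T, by Riesz) *)
Definition adjoint (T : V -> V) : V -> V :=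
  epsilon (inhabits (fun x : V => x))
    (fun Ts : V -> V => forall x y : V, ip H (T x) y = ip H x (Ts y)).

Definition positive_op (A : V -> V) : Prop :=
  bounded_op A /\ forall x : V, 0 <= ip H (A x) x.

(* Moore-Penrose inverse of A, evaluated at y (in its domain
   R(A) + R(A)^perp): the unique x in N(A)^perp with A x - y in R(A)^perp. *)
Definition mp_inv (A : V -> V) (y : V) : V :=
  epsilon (inhabits (0 : V))
    (fun x : V => (forall k : V, A k = 0 -> ip H x k = 0) /\
                  (forall w : V, ip H (A x - y) (A w) = 0)).

Definition in_BA (A S : V -> V) : Prop :=
  bounded_op S /\
  exists Rop : V -> V, bounded_op Rop /\ forall x : V, A (Rop x) = adjoint S (A x).

Definition sharp (A S : V -> V) : V -> V :=
  fun x => mp_inv A (adjoint S (A x)).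

Definition ReA (A S : V -> V) : V -> V :=
  fun x => 2%:R^-1 *: (S x + sharp A S x).

Definition ipA (A : V -> V) (x z : V) : R[i] := ip H (A x) z.
Definition normA (A : V -> V) (z : V) : R := Num.sqrt (complex.Re (ipA A z z)).

Definition cmod (z : R[i]) : R := ComplexField.Normc.normc z.

Definition opnormA (A T : V -> V) : R :=
  sup [set r : R | exists z : V, normA A z = 1 /\ r = normA A (T z)].

Definition numradA (A T : V -> V) : R :=
  sup [set r : R | exists z : V, normA A z = 1 /\ r = cmod (ipA A (T z) z)].

Definition dnumradA (A T : V -> V) : R :=
  sup [set r : R | exists z : V, normA A z = 1 /\
        r = Num.sqrt (cmod (ipA A (T z) z) ^+ 2 + normA A (T z) ^+ 4)].

End Operators.

From HB Require Import structures.
From mathcomp Require Import all_boot all_order all_algebra.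
From mathcomp Require Import complex.
From mathcomp Require Import boolp classical_sets reals.
From mathcomp Require Import ring lra.
From Stdlib Require Import ClassicalEpsilon.

Set Implicit Arguments.
Unset Strict Implicit.
Unset Printing Implicit Defensive.

Import Order.TTheory GRing.Theory Num.Theory.
Local Open Scope ring_scope.
Local Open Scope complex_scope.
Local Open Scope classical_set_scope.

(* Fix z with ||z||_A = 1 and put a = <Sz, z>_A, t = ||Sz||_A^2.  Since
   S^{#_A} is an A-adjoint of S, <S^{#_A} S z, z>_A = <Sz, Sz>_A = t, so the
   A-numerical values of S +- S^{#_A} S at z are a +- t, and
   |a +- t|^2 <= |a|^2 + t^2 + 2 t |Re a|.  Now |a|^2 + t^2 <= domega_A(S)^2,
   t <= ||S||_A^2 and Re a = Re <Re_A(S) z, z>_A <= ||Re_A(S)||_A; take suprema.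
   Making this rigorous needs the Hilbert adjoint (Riesz), A A^dagger A = A
   (projection onto ker A), and the A-boundedness of every S in B_A(H) (power
   trick), so that the suprema defining ||.||_A and domega_A dominate their
   pointwise values. *)

(* [Num.Theory] also exports a [Re] and an [Im]. *)
Local Notation Re := complex.Re.
Local Notation Im := complex.Im.

Section ComplexFacts.
Variable R : realType.
Implicit Types (a b : R[i]) (r : R).

Lemma ReM_complex a b : Re (a * b) = Re a * Re b - Im a * Im b.
Proof. by case: a => a1 a2; case: b. Qed.

Lemma ImM_complex a b : Im (a * b) = Re a * Im b + Im a * Re b.
Proof. by case: a => a1 a2; case: b. Qed.

Lemma ImD a b : Im (a + b) = Im a + Im b.
Proof. by case: a => a1 a2; case: b. Qed.

Lemma ReJ a : Re (conjc a) = Re a.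
Proof. by case: a. Qed.

Lemma ImJ a : Im (conjc a) = - Im a.
Proof. by case: a. Qed.

Lemma Re_realM r a : Re (r%:C * a) = r * Re a.
Proof. by rewrite ReM_complex /= mul0r subr0. Qed.

Lemma complex_ext a b : Re a = Re b -> Im a = Im b -> a = b.
Proof. by case: a => a1 a2; case: b => b1 b2 /= -> ->. Qed.

Lemma half_real : 2%:R^-1 = (2%:R^-1 : R)%:C.
Proof. by rewrite fmorphV /= rmorph_nat. Qed.

Lemma cmod_ge0 a : 0 <= cmod a.
Proof. by case: a => a1 a2; exact: sqrtr_ge0. Qed.

Lemma cmod_eq0 a : cmod a = 0 -> a = 0.
Proof. exact: ComplexField.Normc.eq0_normc. Qed.

Lemma cmodN a : cmod (- a) = cmod a.
Proof. by case: a => a1 a2; rewrite /cmod /= !sqrrN. Qed.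

Lemma cmod_sqr a : cmod a ^+ 2 = Re a ^+ 2 + Im a ^+ 2.
Proof. by case: a => a1 a2; rewrite /cmod /= sqr_sqrtr // addr_ge0 ?sqr_ge0. Qed.

Lemma cmod_real r : cmod r%:C = `|r|.
Proof. by rewrite /cmod /= expr0n addr0 sqrtr_sqr. Qed.

Lemma Re_le_cmod a : `|Re a| <= cmod a.
Proof.
case: a => a1 a2; rewrite /cmod /= -sqrtr_sqr ler_sqrt ?addr_ge0 ?sqr_ge0 //.
by rewrite lerDl sqr_ge0.
Qed.

Lemma cmod_add_real_sqr_le a (c t : R) : 0 <= t -> `|c| <= 1 ->
  cmod (a + (c * t)%:C) ^+ 2 <= cmod a ^+ 2 + t ^+ 2 + 2 * t * `|Re a|.
Proof.
move=> t0 c1; rewrite !cmod_sqr !raddfD /= addr0.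
have c2 : t ^+ 2 * (1 - c ^+ 2) >= 0.
  by rewrite mulr_ge0 ?sqr_ge0 // subr_ge0 -real_normK ?num_real // expr_le1.
have cRe : t * (c * Re a) <= t * `|Re a|.
  rewrite ler_wpM2l // (le_trans (ler_norm _)) // normrM ler_piMl //.
nra.
Qed.

End ComplexFacts.

Section RealFacts.
Variable R : realType.
Implicit Types a b c h x y : R.

Lemma discriminant_le a b c : 0 <= b -> 0 <= c ->
  (forall s, 0 <= a - 2 * s * b + s ^+ 2 * b * c) -> b <= a * c.
Proof.
move=> b0 c0 quad; have [cp|] := ltrP 0 c.
  have := quad c^-1; rewrite -(@ler_pM2r _ c) // mul0r.
  have -> : (a - 2 * c^-1 * b + c^-1 ^+ 2 * b * c) * c = a * c - b.
    by field; rewrite gt_eqF.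
  by rewrite subr_ge0.
move=> cle0; have c_eq0 : c = 0 by apply/le_anti; rewrite cle0 c0.
rewrite c_eq0 mulr0 leNgt; apply/negP => bp.
have := quad ((`|a| + 1) / (2 * b)); rewrite c_eq0 mulr0 addr0.
have -> : a - 2 * ((`|a| + 1) / (2 * b)) * b = a - (`|a| + 1).
  by field; rewrite gt_eqF.
have := ler_norm a; lra.
Qed.

Lemma le0_of_le_mul_eps h (K : R) : (forall e, 0 < e -> h <= K * e) -> h <= 0.
Proof.
move=> hK; apply/ler_addgt0Pr => e e0; rewrite add0r.
have K1 : 0 < `|K| + 1 by rewrite ltr_pwDr.
apply: le_trans (hK (e / (`|K| + 1)) (divr_gt0 e0 K1)) _.
rewrite mulrA ler_pdivrMr //; have := ler_norm K; nra.
Qed.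

Lemma bernoulli_ineq (r : R) (k : nat) : 1 <= r -> 1 + k%:R * (r - 1) <= r ^+ k.
Proof.
move=> r1; elim: k => [|k IH]; first by rewrite mul0r addr0 expr0.
rewrite exprS -nat1r.
have rk0 : 0 <= r ^+ k by rewrite exprn_ge0 //; lra.
have h1 : 0 <= r * (r ^+ k - 1 - k%:R * (r - 1)) by apply: mulr_ge0; lra.
have h2 : 0 <= k%:R * (r - 1) ^+ 2 by rewrite mulr_ge0 ?sqr_ge0.
nra.
Qed.

Lemma le_of_exprn_le x y C : 0 <= x -> 0 <= y ->
  (forall k, x ^+ k <= C * y ^+ k) -> x <= y.
Proof.
move=> x0; rewrite le_eqVlt => /orP[/eqP <- | y0] hk.
  by have := hk 1%N; rewrite !expr1 mulr0.
rewrite leNgt; apply/negP => yx.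
have r1 : 1 < x / y by rewrite ltr_pdivlMr // mul1r.
have hC k : 1 + k%:R * (x / y - 1) <= C.
  apply: le_trans (bernoulli_ineq k (ltW r1)) _.
  by rewrite expr_div_n ler_pdivrMr ?exprn_gt0.
have rp : 0 < x / y - 1 by rewrite subr_gt0.
have [C0|C0] := leP C 0.
  by have := hC 0%N; rewrite mul0r addr0; lra.
have := archi_boundP (ltW (divr_gt0 C0 rp)); rewrite ltr_pdivrMr //.
have := hC (Num.bound (C / (x / y - 1))); lra.
Qed.

Lemma logconvex_exprn_le (a : nat -> R) : a 0%N = 1 -> (forall k, 0 <= a k) ->
  (forall k, a k.+1 ^+ 2 <= a k * a k.+2) -> forall k, a 1%N ^+ k <= a k.
Proof.
move=> a0 age0 logc.
have step k : a 1%N * a k <= a k.+1.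
  elim: k => [|k IH]; first by rewrite a0 mulr1.
  have [ak0|akp] := eqVneq (a k) 0.
    have sq0 : a k.+1 ^+ 2 <= 0 by rewrite -(mul0r (a k.+2)) -ak0 logc.
    have -> : a k.+1 = 0 by apply/eqP; rewrite -sqrf_eq0 eq_le sq0 sqr_ge0.
    by rewrite mulr0.
  have kpos : 0 < a k by rewrite lt_def akp age0.
  rewrite -(ler_pM2l kpos); apply: le_trans (logc k).
  by rewrite expr2 mulrA [a k * _]mulrC ler_wpM2r.
elim=> [|k IH]; first by rewrite expr0 a0.
by rewrite exprS (le_trans _ (step k)) // ler_wpM2l.
Qed.

Lemma sqrtr_lt (q e : R) : 0 < e -> (Num.sqrt q < e) = (q < e ^+ 2).
Proof. by move=> e0; rewrite -[in LHS](gtr0_norm e0) -sqrtr_sqr ltr_sqrt ?exprn_gt0. Qed.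

Lemma exists_invn_lt (e : R) : 0 < e -> exists N : nat, forall n, (N <= n)%N -> n.+1%:R^-1 < e.
Proof.
move=> e0; have [N] := ltr_add_invr e0; rewrite add0r => hN.
exists N => n Nn; apply: le_lt_trans hN.
by rewrite lef_pV2 ?posrE ?ltr0n // ler_nat ltnS.
Qed.
End RealFacts.

Record semi_inner (R : realType) (V : lmodType R[i]) (f : V -> V -> R[i]) : Prop :=
  SemiInner {
    sip_linl : forall z, linear_for *%R (f ^~ z);
    sip_conj : forall x y, f y x = conjc (f x y);
    sip_ge0 : forall x, 0 <= f x x
  }.

Definition qform (R : realType) (V : lmodType R[i]) (f : V -> V -> R[i]) (x : V) : R :=
  Re (f x x).

Definition snorm (R : realType) (V : lmodType R[i]) (f : V -> V -> R[i]) (x : V) : R :=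
  Num.sqrt (qform f x).

Section SemiInnerProduct.
Variables (R : realType) (V : lmodType R[i]) (f : V -> V -> R[i]).
Hypothesis hf : semi_inner f.
Local Notation qf := (qform f).
Local Notation sn := (snorm f).

Let flin z : {scalar V} :=
  HB.pack (f ^~ z) (GRing.isLinear.Build _ _ _ _ (f ^~ z) (sip_linl hf z)).

Lemma sip0l z : f 0 z = 0. Proof. exact: linear0 (flin z). Qed.
Lemma sipDl x y z : f (x + y) z = f x z + f y z. Proof. exact: (linearD (flin z) x y). Qed.
Lemma sipZl a x z : f (a *: x) z = a * f x z. Proof. exact: (linearZ_LR (flin z) a x). Qed.
Lemma sipBl x y z : f (x - y) z = f x z - f y z. Proof. exact: (linearB (flin z) x y). Qed.

Lemma sip0r z : f z 0 = 0.
Proof. by rewrite (sip_conj hf) sip0l conjc0. Qed.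
Lemma sipDr x y z : f z (x + y) = f z x + f z y.
Proof. by rewrite (sip_conj hf) sipDl rmorphD /= -!(sip_conj hf). Qed.
Lemma sipZr a x z : f z (a *: x) = conjc a * f z x.
Proof. by rewrite (sip_conj hf) sipZl rmorphM /= -(sip_conj hf). Qed.
Lemma sipBr x y z : f z (x - y) = f z x - f z y.
Proof. by rewrite (sip_conj hf) sipBl rmorphB /= -!(sip_conj hf). Qed.

Lemma Re_sipC x y : Re (f y x) = Re (f x y).
Proof. by rewrite (sip_conj hf) ReJ. Qed.

Lemma qform_ge0 x : 0 <= qf x.
Proof. by have := sip_ge0 hf x; rewrite lecE => /andP[]. Qed.

Lemma sip_diag x : f x x = (qf x)%:C.
Proof. by apply: complex_ext => //=; rewrite ger0_Im ?(sip_ge0 hf). Qed.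

Lemma snorm_ge0 x : 0 <= sn x.
Proof. exact: sqrtr_ge0. Qed.

Lemma sqr_snorm x : sn x ^+ 2 = qf x.
Proof. by rewrite sqr_sqrtr ?qform_ge0. Qed.

Lemma qformD x y : qf (x + y) = qf x + qf y + 2 * Re (f x y).
Proof. by rewrite /qform sipDl !sipDr !raddfD /= Re_sipC; ring. Qed.

Lemma qformB x y : qf (x - y) = qf x + qf y - 2 * Re (f x y).
Proof. by rewrite /qform sipBl !sipBr !raddfB /= Re_sipC; ring. Qed.

Lemma qformZ a x : qf (a *: x) = cmod a ^+ 2 * qf x.
Proof.
by rewrite /qform sipZl sipZr sip_diag cmod_sqr ReM_complex ImM_complex ReM_complex ImJ ReJ /=; ring.
Qed.

Lemma snormZ a x : sn (a *: x) = cmod a * sn x.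
Proof. by rewrite /snorm qformZ sqrtrM ?sqr_ge0 // sqrtr_sqr ger0_norm ?cmod_ge0. Qed.

Lemma parallelogram x y : qf (x + y) + qf (x - y) = 2 * qf x + 2 * qf y.
Proof. by rewrite qformD qformB; ring. Qed.

(* The quadratic in [s] whose discriminant is Cauchy-Schwarz. *)
Lemma qform_sub_proj x y (s : R) : qf (x - (s%:C * f x y) *: y) =
  qf x - 2 * s * cmod (f x y) ^+ 2 + s ^+ 2 * cmod (f x y) ^+ 2 * qf y.
Proof.
by rewrite qformB qformZ sipZr !cmod_sqr; case: (f x y) => u1 u2 /=; ring.
Qed.

Lemma cauchy_schwarz x y : cmod (f x y) ^+ 2 <= qf x * qf y.
Proof.
apply: discriminant_le; rewrite ?sqr_ge0 ?qform_ge0 // => s.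
by rewrite -qform_sub_proj qform_ge0.
Qed.

Lemma cmod_sip_le x y : cmod (f x y) <= sn x * sn y.
Proof.
rewrite -ler_sqr ?nnegrE ?mulr_ge0 ?snorm_ge0 ?cmod_ge0 //.
by rewrite exprMn !sqr_snorm cauchy_schwarz.
Qed.

Lemma Re_sip_le x y : Re (f x y) <= sn x * sn y.
Proof. exact: le_trans (ler_norm _) (le_trans (Re_le_cmod _) (cmod_sip_le x y)). Qed.

Lemma snormD x y : sn (x + y) <= sn x + sn y.
Proof.
rewrite -ler_sqr ?nnegrE ?addr_ge0 ?snorm_ge0 //.
rewrite sqr_snorm qformD sqrrD !sqr_snorm; have := Re_sip_le x y; lra.
Qed.

Lemma orthogonal_of_minimal w m :
  (forall c, qf w <= qf (w - c *: m)) -> f w m = 0.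
Proof.
move=> wmin; apply: cmod_eq0; apply/eqP.
rewrite -sqrf_eq0 eq_le sqr_ge0 andbT -(mul0r (qf m)).
apply: discriminant_le; rewrite ?sqr_ge0 ?qform_ge0 // => s.
by have := wmin (s%:C * f w m); rewrite qform_sub_proj; lra.
Qed.

Lemma qform_sub_le_midpoint x m m' d : d <= qf (x - 2%:R^-1 *: (m + m')) ->
  qf (m - m') <= 2 * (qf (x - m) - d) + 2 * (qf (x - m') - d).
Proof.
set v := x - _ *: _ => dv.
have -> : m - m' = (x - m') - (x - m) by rewrite opprB [RHS]addrC addrA subrK.
have sum : (x - m') + (x - m) = v + v.
  rewrite -mulr2n -scaler_nat /v scalerBr scalerA divff ?pnatr_eq0 // scale1r.
  by rewrite scaler_nat mulr2n addrACA -opprD [m' + m]addrC.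
have := parallelogram (x - m') (x - m); rewrite sum (qformD v v) -/(qf v); lra.
Qed.

End SemiInnerProduct.

Section Hilbert.
Variables (R : realType) (V : lmodType R[i]) (H : hilbert V).
Local Notation ipH := (ip H).
Local Notation qH := (qform (ip H)).

Lemma ip_semi_inner : semi_inner ipH.
Proof. by split; [move=> z a x y; exact: ip_linl | exact: ip_conj | exact: ip_ge0]. Qed.

Definition hcvg (u : nat -> V) (l : V) := forall e : R, 0 < e ->
  exists N : nat, forall n, (N <= n)%N -> hnorm H (u n - l) < e.

Definition hclosed (M : V -> Prop) :=
  forall u l, (forall n, M (u n)) -> hcvg u l -> M l.

Definition subspace (M : V -> Prop) :=
  M 0 /\ forall a x y, M x -> M y -> M (a *: x + y).

Lemma hnormE x : hnorm H x = snorm ipH x.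
Proof. by []. Qed.

Lemma hnorm_ge0 x : 0 <= hnorm H x.
Proof. exact: sqrtr_ge0. Qed.

Lemma hcvg_of_qform_le (u : nat -> V) :
  (forall n k, qH (u n - u k) <= 2 * n.+1%:R^-1 + 2 * k.+1%:R^-1) ->
  exists l, hcvg u l.
Proof.
move=> uC; apply: ip_complete => e e0.
have [N hN] := exists_invn_lt (divr_gt0 (exprn_gt0 2 e0) (ltr0Sn R 3)).
exists N => m n Nm Nn; rewrite /hnorm_of sqrtr_lt //.
apply: le_lt_trans (uC m n) _; have := hN m Nm; have := hN n Nn.
by set a := m.+1%:R^-1; set b := n.+1%:R^-1; lra.
Qed.

Lemma qform_le_of_hcvg x (u : nat -> V) p d : 0 <= d -> hcvg u p ->
  (forall n, qH (x - u n) < d + n.+1%:R^-1) -> qH (x - p) <= d.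
Proof.
move=> d0 up ud; rewrite -(sqr_snorm ip_semi_inner) -ler_sqrt // sqrtr_sqr.
rewrite ger0_norm ?snorm_ge0 //; apply/ler_addgt0Pr => e e0.
have e2 : 0 < e / 2 by rewrite divr_gt0.
have [N1 hN1] := exists_invn_lt (exprn_gt0 2 e2); have [N2 hN2] := up _ e2.
set n := (N1 + N2)%N.
have un_p : hnorm H (u n - p) < e / 2 by apply: hN2; rewrite leq_addl.
have x_un : snorm ipH (x - u n) <= Num.sqrt d + e / 2.
  rewrite -ler_sqr ?nnegrE ?snorm_ge0 ?addr_ge0 ?sqrtr_ge0 ?(ltW e2) //.
  rewrite (sqr_snorm ip_semi_inner) sqrrD sqr_sqrtr //.
  have := ud n; have := hN1 n (leq_addr _ _); have := sqrtr_ge0 d.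
  by set a := n.+1%:R^-1; nra.
have := snormD ip_semi_inner (x - u n) (u n - p); rewrite addrA subrK.
by move: un_p; rewrite hnormE; lra.
Qed.

Lemma projection M : subspace M -> hclosed M ->
  forall x, exists2 p, M p & forall m, M m -> ipH (x - p) m = 0.
Proof.
move=> [M0 Mlin] Mcl x.
pose E : set R := [set r | exists2 m, M m & qH (x - m) = r].
have Elb : lbound E 0 by move=> _ [m _ <-]; exact: (qform_ge0 ip_semi_inner (x - m)).
have Einf : has_inf E by split; [exists (qH (x - 0)); exists 0 | exists 0].
set d := inf E.
have d_le m : M m -> d <= qH (x - m) by move=> Mm; apply: ge_inf; [exists 0 | exists m].
have d0 : 0 <= d by apply: lb_le_inf => //; exists (qH (x - 0)); exists 0.
have /choice [ms msP] : forall n : nat, exists m, M m /\ qH (x - m) < d + n.+1%:R^-1.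
  move=> n; have n0 : 0 < n.+1%:R^-1 :> R by rewrite invr_gt0 ltr0n.
  by have [_ [m Mm <-] hm] := inf_adherent n0 Einf; exists m.
have [p ms_p] : exists l, hcvg ms l.
  apply: hcvg_of_qform_le => n k.
  have [Mn xn] := msP n; have [Mk xk] := msP k.
  have Mmid : M (2%:R^-1 *: (ms n + ms k)).
    by rewrite -[_ *: _]addr0; apply: (Mlin) => //; rewrite -[ms n]scale1r; apply: (Mlin).
  have := qform_sub_le_midpoint ip_semi_inner (d_le _ Mmid).
  by move: xn xk; set a := n.+1%:R^-1; set b := k.+1%:R^-1; lra.
have Mp : M p by apply: Mcl ms_p => n; case: (msP n).
have p_min m : M m -> qH (x - p) <= qH (x - m).
  move=> Mm; apply: le_trans (d_le _ Mm).
  by apply: qform_le_of_hcvg d0 ms_p _ => n; case: (msP n).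
exists p => // m Mm; apply: (orthogonal_of_minimal ip_semi_inner) => c.
by rewrite -addrA -opprD; apply: p_min; rewrite addrC; apply: (Mlin).
Qed.

Section BoundedFunctional.
Variables (g : V -> R[i]) (K : R).
Hypotheses (glin : linear_for *%R g) (gK : forall x, cmod (g x) <= K * hnorm H x).
HB.instance Definition _ := GRing.isLinear.Build _ _ _ _ g glin.

Lemma functional_ker_closed : hclosed (fun x => g x = 0).
Proof.
move=> u l gu ul; apply: cmod_eq0; apply/le_anti; rewrite cmod_ge0 andbT.
apply: (@le0_of_le_mul_eps _ _ `|K|) => e e0; have [N uN] := ul e e0.
have -> : g l = - g (u N - l) by rewrite linearB /= gu sub0r opprK.
rewrite cmodN; apply: le_trans (gK _) _.
apply: le_trans (ler_wpM2r (hnorm_ge0 _) (ler_norm K)) _.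
by rewrite ler_wpM2l ?normr_ge0 // ltW // uN.
Qed.

Lemma riesz : exists v, forall x, g x = ipH x v.
Proof.
have [g0 | /existsNP [x0 /eqP gx0]] := pselect (forall x, g x = 0).
  by exists 0 => x; rewrite g0 (sip0r ip_semi_inner).
have ker_sub : subspace (fun x => g x = 0).
  by split=> [|a x y gx gy]; rewrite ?linear0 // linearP /= gx gy mulr0 addr0.
have [p gp p_perp] := projection ker_sub functional_ker_closed x0.
pose u := x0 - p.
have gu : g u != 0 by rewrite linearB /= gp subr0.
have uu : ipH u u != 0 by apply: contra gu => /eqP /ip_eq0 ->; rewrite linear0.
have u_perp m : g m = 0 -> ipH m u = 0.
  by move=> gm; rewrite (sip_conj ip_semi_inner) (p_perp m gm) conjc0.
exists (conjc (g u / ipH u u) *: u) => x; rewrite (sipZr ip_semi_inner) conjcK.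
have : ipH (x - (g x / g u) *: u) u = 0.
  by apply: u_perp; rewrite linearB linearZ_LR /= mulfVK // subrr.
rewrite (sipBl ip_semi_inner) (sipZl ip_semi_inner) => /eqP; rewrite subr_eq0 => /eqP ->.
by field; apply/andP.
Qed.

End BoundedFunctional.

Lemma hnorm_iter_le (T : V -> V) K : 0 <= K -> (forall x, hnorm H (T x) <= K * hnorm H x) ->
  forall k x, hnorm H (iter k T x) <= K ^+ k * hnorm H x.
Proof.
move=> K0 TK; elim=> [|k IH] x; first by rewrite expr0 mul1r.
by rewrite iterS (le_trans (TK _)) // exprS -mulrA ler_wpM2l.
Qed.

Section BoundedOperator.
Variable T : V -> V.
Hypothesis bT : bounded_op H T.
HB.instance Definition _ := GRing.isLinear.Build _ _ _ _ T (proj1 bT).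

Lemma bounded_op_pos : exists2 K, 0 < K & forall x, hnorm H (T x) <= K * hnorm H x.
Proof.
have [M TM] := proj2 bT; exists (`|M| + 1) => [|x]; first by rewrite ltr_pwDr.
apply: le_trans (TM x) _; rewrite ler_wpM2r ?hnorm_ge0 //.
by rewrite (le_trans (ler_norm M)) // lerDl.
Qed.

Lemma ip_op_linear y : linear_for *%R (fun x => ipH (T x) y).
Proof. by move=> a x z; rewrite linearP /= (sipDl ip_semi_inner) (sipZl ip_semi_inner). Qed.

Lemma cmod_ip_op_le :
  exists2 K, 0 < K & forall x y, cmod (ipH (T x) y) <= (K * hnorm H y) * hnorm H x.
Proof.
have [K K0 TK] := bounded_op_pos; exists K => // x y.
apply: le_trans (cmod_sip_le ip_semi_inner _ _) _.
by rewrite -!hnormE mulrAC; apply: ler_wpM2r; [exact: hnorm_ge0 | exact: TK].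
Qed.

Lemma adjointP : forall x y, ipH (T x) y = ipH x (adjoint H T y).
Proof.
have [K _ TK] := cmod_ip_op_le.
have /choice [Ts TsP] y : exists v, forall x, ipH (T x) y = ipH x v.
  exact: riesz (ip_op_linear y) (TK ^~ y).
have adj : exists Ts : V -> V, forall x y, ipH (T x) y = ipH x (Ts y).
  by exists Ts => x y; apply: TsP.
exact: (epsilon_spec _ _ adj).
Qed.

Lemma op_ker_closed : hclosed (fun x => T x = 0).
Proof.
move=> u l Tu ul; have [K _ TK] := cmod_ip_op_le.
have := functional_ker_closed (ip_op_linear (T l)) (TK ^~ (T l)) _ ul.
by move=> /(_ _) /ip_eq0 -> // n; rewrite Tu (sip0l ip_semi_inner).
Qed.

Lemma mp_invP r : T (mp_inv H T (T r)) = T r.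
Proof.
have ker_sub : subspace (fun x => T x = 0).
  by split=> [|a x y Tx Ty]; rewrite ?linear0 // linearP /= Tx Ty scaler0 addr0.
have [p Tp p_perp] := projection ker_sub op_ker_closed r.
have spec : exists x, (forall k, T k = 0 -> ipH x k = 0) /\
                      (forall w, ipH (T x - T r) (T w) = 0).
  exists (r - p); split=> [k Tk | w]; first exact: p_perp.
  by rewrite linearB /= Tp subr0 subrr (sip0l ip_semi_inner).
(* Test the second clause against [w = mp_inv (T r) - r]. *)
have [_ /(_ (mp_inv H T (T r) - r))] := epsilon_spec (inhabits 0) _ spec.
by rewrite linearB /= => /ip_eq0 /eqP; rewrite subr_eq0 => /eqP.
Qed.

End BoundedOperator.

End Hilbert.

Section PositiveOperator.
Variables (R : realType) (V : lmodType R[i]) (H : hilbert V) (A : V -> V).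
Hypothesis hA : positive_op H A.
Local Notation ipH := (ip H).
Local Notation ipAA := (ipA H A).
HB.instance Definition _ := GRing.isLinear.Build _ _ _ _ A (proj1 (proj1 hA)).

Lemma normAE x : normA H A x = snorm ipAA x.
Proof. by []. Qed.

(* Polarization: [<A z, z>] is real for [z = x + y] and for [z = x + i y]. *)
Lemma ip_A_conj x y : ipH (A y) x = conjc (ipH (A x) y).
Proof.
have Im0 z : Im (ipH (A z) z) = 0 by apply: ger0_Im; exact: (proj2 hA).
have e1 := Im0 (x + y); have e2 := Im0 (x + 'i%C *: y).
rewrite linearD /= !(sipDl (ip_semi_inner H)) !(sipDr (ip_semi_inner H)) !ImD !Im0 in e1.
rewrite linearD linearZZ /= !(sipDl (ip_semi_inner H)) !(sipDr (ip_semi_inner H)) in e2.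
rewrite !(sipZl (ip_semi_inner H)) !(sipZr (ip_semi_inner H)) !ImD !ImM_complex !ReM_complex /= !Im0 in e2.
rewrite !(mul0r, mul1r, mulN1r, add0r, addr0, oppr0, subr0, opprK) in e1 e2.
by apply: complex_ext; apply/eqP; rewrite ?ReJ ?ImJ -subr_eq0 ?opprK addrC ?e1 ?e2.
Qed.

Lemma positive_op_sym x y : ipH (A x) y = ipH x (A y).
Proof. by rewrite (ip_A_conj y x) (ip_conj H (A y) x). Qed.

Lemma ipA_semi_inner : semi_inner ipAA.
Proof.
split=> [z a x y | x y | x]; rewrite /ipA.
- by rewrite linearP /= (sipDl (ip_semi_inner H)) (sipZl (ip_semi_inner H)).
- exact: ip_A_conj.
- exact: (proj2 hA).
Qed.

Lemma qform_ipA_le : exists2 KA, 0 < KA & forall y, qform ipAA y <= KA * hnorm H y ^+ 2.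
Proof.
have [K K0 AK] := bounded_op_pos (proj1 hA); exists K => // y.
apply: le_trans (Re_sip_le (ip_semi_inner H) (A y) y) _.
by rewrite expr2 mulrA; apply: ler_wpM2r; [exact: hnorm_ge0 | exact: AK].
Qed.

(* The power trick: [k |-> ||T^k z||_A] is log-convex, so [||T z||_A^k <= ||T^k z||_A],
   which grows at most like [K^k]. *)
Lemma normA_le_of_Aselfadjoint (T : V -> V) K : 0 <= K ->
  (forall x, hnorm H (T x) <= K * hnorm H x) ->
  (forall x y, ipAA (T x) y = ipAA x (T y)) ->
  forall z, normA H A z = 1 -> normA H A (T z) <= K.
Proof.
move=> K0 TK Tsym z z1.
have [KA KA0 qA] := qform_ipA_le.
pose a k := snorm ipAA (iter k T z).
have a_ge0 k : 0 <= a k by exact: snorm_ge0.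
have logc k : a k.+1 ^+ 2 <= a k * a k.+2.
  rewrite /a /= (sqr_snorm ipA_semi_inner) /qform Tsym.
  exact: (Re_sip_le ipA_semi_inner).
have a_le k : a k <= (Num.sqrt KA * hnorm H z) * K ^+ k.
  rewrite -ler_sqr ?nnegrE ?a_ge0 ?mulr_ge0 ?sqrtr_ge0 ?exprn_ge0 ?hnorm_ge0 //.
  rewrite /a /= (sqr_snorm ipA_semi_inner) !exprMn (sqr_sqrtr (ltW KA0)).
  apply: le_trans (qA _) _; rewrite -mulrA ler_pM2l // -exprMn.
  rewrite ler_pXn2r ?nnegrE ?mulr_ge0 ?exprn_ge0 ?hnorm_ge0 // mulrC.
  exact: hnorm_iter_le.
apply: (le_of_exprn_le (a_ge0 1%N) K0) => k.
exact: le_trans (logconvex_exprn_le z1 a_ge0 logc k) (a_le k).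
Qed.

Lemma normA_le_of_Aadjoint (P Q : V -> V) : bounded_op H P -> bounded_op H Q ->
  (forall x y, ipAA (P x) y = ipAA x (Q y)) ->
  exists K, forall z, normA H A z = 1 -> normA H A (P z) <= K.
Proof.
move=> bP bQ PQ.
have [KP KP0 PK] := bounded_op_pos bP; have [KQ KQ0 QK] := bounded_op_pos bQ.
have QP_sym x y : ipAA (Q (P x)) y = ipAA x (Q (P y)).
  by rewrite (sip_conj ipA_semi_inner) -PQ -(sip_conj ipA_semi_inner) PQ.
have QPK x : hnorm H (Q (P x)) <= (KQ * KP) * hnorm H x.
  by rewrite -mulrA (le_trans (QK _)) // ler_pM2l.
exists (Num.sqrt (KQ * KP)) => z z1.
have QPz := normA_le_of_Aselfadjoint (ltW (mulr_gt0 KQ0 KP0)) QPK QP_sym z1.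
rewrite normAE -ler_sqr ?nnegrE ?snorm_ge0 ?sqrtr_ge0 // (sqr_sqrtr (ltW (mulr_gt0 KQ0 KP0))).
rewrite (sqr_snorm ipA_semi_inner) /qform PQ.
apply: le_trans (Re_sip_le ipA_semi_inner _ _) _.
by rewrite -!normAE z1 mul1r.
Qed.

End PositiveOperator.

Section ImageSup.
Variables (R : realType) (T : Type) (P : T -> Prop) (g : T -> R).
Local Notation img := [set r | exists z, P z /\ r = g z].

Lemma le_sup_image b z : (forall y, P y -> g y <= b) -> P z -> g z <= sup img.
Proof.
move=> gb Pz; apply: sup_upper_bound; last by exists z.
by split; [exists (g z); exists z | exists b => _ [y [Py ->]]; exact: gb].
Qed.

Lemma sup_image_sqr_le B : (exists z, P z) ->
  (forall z, P z -> 0 <= g z /\ g z ^+ 2 <= B) -> sup img ^+ 2 <= B.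
Proof.
move=> [z0 Pz0] gB; have [g0 gz0B] := gB z0 Pz0.
have B0 : 0 <= B := le_trans (sqr_ge0 _) gz0B.
have ub y : P y -> g y <= Num.sqrt B.
  move=> Py; have [gy gyB] := gB y Py.
  by rewrite -ler_sqr ?nnegrE ?sqrtr_ge0 // sqr_sqrtr.
have s0 : 0 <= sup img := le_trans g0 (le_sup_image ub Pz0).
have sB : sup img <= Num.sqrt B.
  by apply: ge_sup => [|_ [y [Py ->]]]; [exists (g z0); exists z0 | exact: ub].
by rewrite -(sqr_sqrtr B0) ler_pXn2r ?nnegrE ?sqrtr_ge0.
Qed.

Lemma sup_image_empty : ~ (exists z, P z) -> sup img = 0.
Proof.
move=> noP; rewrite -sup0; congr sup; apply/seteqP; split=> // r [z [Pz _]].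
by apply: noP; exists z.
Qed.

End ImageSup.

Lemma normA_le_opnormA (R : realType) (V : lmodType R[i]) (H : hilbert V) (A T : V -> V) :
  (exists K, forall z, normA H A z = 1 -> normA H A (T z) <= K) ->
  forall z, normA H A z = 1 -> normA H A (T z) <= opnormA H A T.
Proof. by move=> [K TK] z z1; apply: (le_sup_image (g := fun z => normA H A (T z)) TK). Qed.

Section Theorem2p15.
(* [Sa] is the operator R with A R = S^* A that puts S in B_A(H). *)
Variables (R : realType) (V : lmodType R[i]) (H : hilbert V) (A S Sa : V -> V).
Hypotheses (hA : positive_op H A) (bS : bounded_op H S) (bSa : bounded_op H Sa).
Hypothesis ASa : forall x, A (Sa x) = adjoint H S (A x).
Local Notation ipAA := (ipA H A).
Local Notation nA := (normA H A).
Local Notation sA := (ipA_semi_inner hA).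
Local Notation sharpS := (sharp H A S).

Lemma ipA_adjoint x y : ipAA (S x) y = ipAA x (Sa y).
Proof.
by rewrite /ipA (positive_op_sym hA) (adjointP bS) -ASa -(positive_op_sym hA).
Qed.

Lemma ipA_Sa x y : ipAA (Sa x) y = ipAA x (S y).
Proof. by rewrite (sip_conj sA) -ipA_adjoint -(sip_conj sA). Qed.

Lemma ipA_sharp x y : ipAA (sharpS x) y = ipAA (Sa x) y.
Proof. by rewrite /ipA /sharp -ASa (mp_invP (proj1 hA)). Qed.

Lemma normA_sharp x : nA (sharpS x) = nA (Sa x).
Proof. by rewrite !normAE /snorm /qform ipA_sharp (Re_sipC sA) ipA_sharp. Qed.

Lemma ipA_sharpS z : ipAA (sharpS (S z)) z = (nA (S z) ^+ 2)%:C.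
Proof. by rewrite ipA_sharp ipA_Sa (sip_diag sA) normAE (sqr_snorm sA). Qed.

Lemma Re_ipA_ReA z : Re (ipAA (ReA H A S z) z) = Re (ipAA (S z) z).
Proof.
rewrite /ReA (sipZl sA) (sipDl sA) ipA_sharp ipA_Sa (sip_conj sA (S z) z).
by rewrite half_real Re_realM raddfD /= ReJ mulrC mulrDl -splitr.
Qed.

Lemma normA_S_bounded : exists K, forall z, nA z = 1 -> nA (S z) <= K.
Proof. exact: (normA_le_of_Aadjoint hA bS bSa ipA_adjoint). Qed.

Lemma normA_ReA_bounded : exists K, forall z, nA z = 1 -> nA (ReA H A S z) <= K.
Proof.
have [KS SK] := normA_S_bounded.
have [KSa SaK] := normA_le_of_Aadjoint hA bSa bS ipA_Sa.
exists (KS + KSa) => z z1; rewrite /ReA normAE (snormZ sA) half_real cmod_real.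
rewrite ger0_norm ?invr_ge0 ?ler0n //.
apply: le_trans (_ : snorm ipAA (S z + sharpS z) <= _).
  by rewrite ler_piMl ?snorm_ge0 // invf_le1 ?ler1n ?ltr0n.
apply: le_trans (snormD sA _ _) _; rewrite -!normAE normA_sharp.
exact: lerD (SK z z1) (SaK z z1).
Qed.

Lemma dnumradA_sqr_ge z : nA z = 1 ->
  cmod (ipAA (S z) z) ^+ 2 + (nA (S z) ^+ 2) ^+ 2 <= dnumradA H A S ^+ 2.
Proof.
move=> z1; have [K SK] := normA_S_bounded.
have cmod_le y : nA y = 1 -> cmod (ipAA (S y) y) <= nA (S y).
  by move=> y1; rewrite -[X in _ <= X]mulr1 -y1; exact: (cmod_sip_le sA).
set g := fun y => Num.sqrt (cmod (ipAA (S y) y) ^+ 2 + nA (S y) ^+ 4).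
have gD : g z <= dnumradA H A S.
  apply: (le_sup_image (g := g) (b := Num.sqrt (K ^+ 2 + K ^+ 4))) z1 => y y1.
  have Sy0 := snorm_ge0 ipAA (S y); have K0 := le_trans Sy0 (SK y y1).
  rewrite ler_sqrt ?addr_ge0 ?exprn_ge0 //.
  rewrite lerD // ler_pXn2r ?nnegrE ?cmod_ge0 ?SK //.
  exact: le_trans (cmod_le y y1) (SK y y1).
rewrite -exprM -(sqr_sqrtr (_ : 0 <= cmod (ipAA (S z) z) ^+ 2 + nA (S z) ^+ 4)).
  by rewrite ler_pXn2r ?nnegrE ?sqrtr_ge0 ?(le_trans (sqrtr_ge0 _) gD).
by rewrite addr_ge0 ?exprn_ge0 ?cmod_ge0 ?(snorm_ge0 ipAA).
Qed.

Lemma cmod_ipA_add_sqr_le (c : R) z : `|c| <= 1 -> nA z = 1 ->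
  cmod (ipAA (S z) z + (c * nA (S z) ^+ 2)%:C) ^+ 2 <=
  dnumradA H A S ^+ 2 + 2 * opnormA H A S ^+ 2 * opnormA H A (ReA H A S).
Proof.
move=> c1 z1; set a := ipAA (S z) z; set t := nA (S z).
have t0 : 0 <= t := snorm_ge0 ipAA (S z).
apply: le_trans (cmod_add_real_sqr_le a (sqr_ge0 t) c1) _.
apply: lerD; first exact: (dnumradA_sqr_ge z1).
have tN : t <= opnormA H A S := normA_le_opnormA normA_S_bounded z1.
have tN2 : t ^+ 2 <= opnormA H A S ^+ 2 by rewrite ler_pXn2r ?nnegrE ?(le_trans t0 tN).
have ReQ : `|Re a| <= opnormA H A (ReA H A S).
  rewrite -Re_ipA_ReA; apply: le_trans (Re_le_cmod _) _.
  apply: le_trans (cmod_sip_le sA _ _) _; rewrite -!normAE z1 mulr1.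
  exact: (normA_le_opnormA normA_ReA_bounded z1).
have two0 : (0 : R) < 2 by rewrite ltr0n.
apply: ler_pM => //; first by rewrite pmulr_rge0 // sqr_ge0.
by rewrite ler_pM2l.
Qed.

Lemma numradA_sqr_le (c : R) (T : V -> V) : `|c| <= 1 ->
  (forall z, ipAA (T z) z = ipAA (S z) z + (c * nA (S z) ^+ 2)%:C) ->
  numradA H A T ^+ 2 <=
  dnumradA H A S ^+ 2 + 2 * opnormA H A S ^+ 2 * opnormA H A (ReA H A S).
Proof.
move=> c1 Tz; have [[z0 z01] | none] := pselect (exists z, nA z = 1); last first.
  (* no A-unit vector (A = 0): every supremum is [sup set0 = 0] *)
  by rewrite /numradA /dnumradA /opnormA !sup_image_empty // expr0n /= mulr0 addr0.
apply: (sup_image_sqr_le (g := fun z => cmod (ipAA (T z) z))); first by exists z0.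
by move=> z z1; rewrite cmod_ge0 Tz cmod_ipA_add_sqr_le.
Qed.

End Theorem2p15.

Theorem theorem2p15 (R : realType) (V : lmodType R[i]) (H : hilbert V)
  (A S : V -> V) :
  positive_op H A -> in_BA H A S ->
  dnumradA H A S ^+ 2
    + 2%:R * opnormA H A S ^+ 2 * opnormA H A (ReA H A S)
  >= Num.max (numradA H A (fun x => S x + sharp H A S (S x)) ^+ 2)
             (numradA H A (fun x => S x - sharp H A S (S x)) ^+ 2).
Proof.
move=> hA [bS [Sa [bSa ASa]]]; have sA := ipA_semi_inner hA.
rewrite ge_max; apply/andP; split.
  apply: (numradA_sqr_le (c := 1) hA bS bSa ASa); first by rewrite normr1.
  by move=> z /=; rewrite mul1r (sipDl sA) (ipA_sharpS hA bS ASa).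
apply: (numradA_sqr_le (c := -1) hA bS bSa ASa); first by rewrite normrN1.
by move=> z /=; rewrite mulN1r rmorphN (sipBl sA) (ipA_sharpS hA bS ASa).
Qed.
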